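(* Consider either spinless fermions or spinless bosons on the ring $[1:L]$, and let $H=\sum_{m=m_0}^{m_1}H^{(m)}=\bigoplus_{n\ge0}H_n$ be a Hamiltonian of the form described in the context. Let $n\geq m_1$ be such that $H_n\geq 0$ and $$H_{n+1}\geq \frac{1}{n+1-m_0}\sum_{j=1}^L a_j^\dagger H_n a_j .$$ Then $$\operatorname{gap}H_{n+1}\geq \frac{n+1-\Big\|P_{n+1}^\perp\sum_{j=1}^L a_j^\dagger P_n a_j P_{n+1}^\perp\Big\|}{n+1-m_0}\,\operatorname{gap}H_n .$$
   Context: Let $a_j^\dagger,a_j$ ($j\in[1:L]$) be the canonical creation and annihilation operators of spinless fermions (CAR) or bosons (CCR) on the Fock space over $\mathbb{C}^L$, and $N=\sum_{j}a_j^\dagger a_j$. The Hamiltonian is $H=\sum_{m=m_0}^{m_1}H^{(m)}$ with integers $m_0\le m_1$ and $$H^{(m)}=\sum_{1\le j_1,\dots,j_m\le L}\ \sum_{1\le k_1,\dots,k_m\le L} W^{k_1\dots k_m}_{j_1\dots j_m}\,a^\dagger_{j_1}\cdots a^\dagger_{j_m}a_{k_m}\cdots a_{k_1},$$ with coefficients $W\in\mathbb{C}$ such that each $H^{(m)}$ is self-adjoint; $H_n$ denotes the restriction of $H$ to the $n$-particle subspace. For each $n$, $P_n$ is the orthogonal projection (in the $n$-particle space) onto $\ker H_n$, $P_n^\perp=\mathbb{1}-P_n$, and $\operatorname{gap}H_n=\min\{\langle\psi,H_n\psi\rangle:\ \psi\perp\ker H_n,\ \|\psi\|=1\}$. The operator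 $\sum_j a_j^\dagger P_n a_j$ acts on the $(n+1)$-particle space, and $\|\cdot\|$ is the operator norm. *)

From HB Require Import structures.
From mathcomp Require Import all_boot all_order all_algebra.
From mathcomp Require Import complex.
From mathcomp Require Import classical_sets boolp reals constructive_ereal ereal.
Unset Printing Implicit Defensive.
Import Order.TTheory GRing.Theory Num.Theory.
Local Open Scope ring_scope.
Local Open Scope classical_set_scope.
Local Open Scope complex_scope.

Inductive statistics := Fermion | Boson.

Section Fock.
Variables (R : realType) (stat : statistics) (L : nat).

Local Notation C := R[i].

(** Occupation-number configurations on the sites [1:L] (indexed by 'I_L). *)
Definition cfg := {ffun 'I_L -> nat}.

(** Vectors of the Fock space are coefficient functions on configurations
    (occupation-number basis); operators act on them. *)
Definition vec := cfg -> C.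
Definition op := vec -> vec.

Definition upd (c : cfg) (j : 'I_L) (k : nat) : cfg :=
  [ffun i => if i == j then k else c i].

(** Jordan-Wigner sign (-1)^(number of occupied sites i < j) *)
Definition jwsign (c : cfg) (j : 'I_L) : C :=
  (-1) ^+ (\sum_(i < L | (i < j)%N) c i)%N.

(** admissible configuration (Pauli principle for fermions) *)
Definition admissible (c : cfg) : bool :=
  if stat is Fermion then [forall i, (c i <= 1)%N] else true.

Definition in_sector (n : nat) (c : cfg) : bool :=
  ((\sum_(i < L) c i)%N == n) && admissible c.

(** annihilation operator a_j, acting on coefficient functions:
    bosons:   a_j |c> = sqrt(c_j) |c - e_j>
    fermions: a_j |c> = [c_j = 1] (-1)^{#occupied i<j} |c - e_j> *)
Definition ann (j : 'I_L) : op := fun psi c =>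
  match stat with
  | Boson => (Num.sqrt ((c j).+1)%:R)%:C * psi (upd c j (c j).+1)
  | Fermion => if c j == 0%N then jwsign c j * psi (upd c j 1) else 0
  end.

(** creation operator a_j^dagger (the adjoint of a_j) *)
Definition cre (j : 'I_L) : op := fun psi c =>
  match stat with
  | Boson => if (0 < c j)%N then (Num.sqrt (c j)%:R)%:C * psi (upd c j (c j).-1) else 0
  | Fermion => if c j == 1%N then jwsign c j * psi (upd c j 0) else 0
  end.

(** a_{k_m} ... a_{k_1} psi  (a_{k_1} applied first) *)
Definition ann_str (ks : seq 'I_L) (psi : vec) : vec :=
  foldl (fun phi k => ann k phi) psi ks.

(** a^dagger_{j_1} ... a^dagger_{j_m} psi  (a^dagger_{j_m} applied first) *)
Definition cre_str (js : seq 'I_L) (psi : vec) : vec :=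
  foldr (fun j phi => cre j phi) psi js.

(** Coefficients: W m js ks = W^{k_1 ... k_m}_{j_1 ... j_m} *)
Definition coeffs := forall m : nat, m.-tuple 'I_L -> m.-tuple 'I_L -> C.

Definition Hm (W : coeffs) (m : nat) : op := fun psi c =>
  \sum_(js : m.-tuple 'I_L) \sum_(ks : m.-tuple 'I_L)
     W m js ks * cre_str js (ann_str ks psi) c.

Definition Ham (W : coeffs) (m0 m1 : nat) : op := fun psi c =>
  \sum_(m0 <= m < m1.+1) Hm W m psi c.

Definition sector (n : nat) (psi : vec) : Prop :=
  forall c, ~~ in_sector n c -> psi c = 0.

Definition cfg_of (n : nat) (f : {ffun 'I_L -> 'I_n.+1}) : cfg :=
  [ffun i => nat_of_ord (f i)].

(** inner product on the n-particle space (antilinear in the first slot);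
    every configuration with n particles has all occupations <= n *)
Definition inner (n : nat) (phi psi : vec) : C :=
  \sum_(f : {ffun 'I_L -> 'I_n.+1} | in_sector n (cfg_of n f))
     (phi (cfg_of n f))^* * psi (cfg_of n f).

Definition vnorm (n : nat) (psi : vec) : R :=
  Num.sqrt (complex.Re (inner n psi psi)).

Definition opnorm (n : nat) (X : op) : R :=
  sup [set vnorm n (X psi) | psi in [set psi | sector n psi /\ vnorm n psi = 1]].

Definition in_ker (H : op) (n : nat) (psi : vec) : Prop :=
  sector n psi /\ forall c, H psi c = 0.

Definition is_ker_proj (H : op) (n : nat) (P : op) : Prop :=
  forall psi, sector n psi ->
    in_ker H n (P psi) /\
    forall phi, in_ker H n phi -> inner n phi (fun c => psi c - P psi c) = 0.

(** gap H_n = inf { <psi, H psi> : psi in n-particle space, psi _|_ ker H_n,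
    ||psi|| = 1 }, as an extended real (+oo if the set is empty) *)
Definition gap (H : op) (n : nat) : \bar R :=
  ereal_inf [set (complex.Re (inner n psi (H psi)))%:E | psi in
    [set psi | sector n psi /\ (forall phi, in_ker H n phi -> inner n phi psi = 0)
               /\ vnorm n psi = 1]].

End Fock.

(* Let psi be a unit vector of the (n+1)-particle space orthogonal to ker H_{n+1}, so
   that P_{n+1} psi = 0, and put phi_j = a_j psi.  As sum_j a_j^+ a_j is the number
   operator, sum_j |phi_j|^2 = n+1, while sum_j |P_n phi_j|^2 = <psi, X psi> <= |X|;
   hence sum_j |P_n^perp phi_j|^2 >= n+1 - |X|.  Each <phi_j, H_n phi_j> is at least
   gap H_n |P_n^perp phi_j|^2, and the hypothesis on H_{n+1} turns the sum of these
   energies into a lower bound for (n+1-m0) <psi, H_{n+1} psi>.  Since the operator norm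
   is a supremum, X must also be shown bounded: |X psi|^2 <= L (n+1)^2 |psi|^2. *)

From HB Require Import structures.
From mathcomp Require Import all_boot all_order all_algebra.
From mathcomp Require Import complex.
From mathcomp Require Import classical_sets boolp reals constructive_ereal ereal.
From mathcomp Require Import zify lra.
Import Order.TTheory GRing.Theory Num.Theory.
Local Open Scope complex_scope.
Local Open Scope ring_scope.

Section RealPart.
Context {R : realType}.
Local Notation Re := (@complex.Re R).

Lemma Re_add (z w : R[i]) : Re (z + w) = Re z + Re w.
Proof. by case: z; case: w. Qed.

Lemma Re_sub (z w : R[i]) : Re (z - w) = Re z - Re w.
Proof. by case: z; case: w. Qed.

Lemma Re_scale (a : R) (z : R[i]) : Re (a%:C * z) = a * Re z.
Proof. by case: z => x y /=; rewrite mul0r subr0. Qed.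

Lemma Re_sum (I : Type) (r : seq I) (P : pred I) (F : I -> R[i]) :
  Re (\sum_(i <- r | P i) F i) = \sum_(i <- r | P i) Re (F i).
Proof. exact: (big_morph _ Re_add). Qed.

Lemma Re_conjC (z : R[i]) : Re z^* = Re z.
Proof. by case: z. Qed.

Lemma conjC_real (a : R) : a%:C^* = a%:C.
Proof. by apply/conj_Creal/complex_realP; exists a. Qed.

Lemma natC (k : nat) : (k%:R : R[i]) = (k%:R : R)%:C.
Proof. by rewrite rmorph_nat. Qed.

Lemma ler_Re {z w : R[i]} : z <= w -> Re z <= Re w.
Proof. by rewrite lecE => /andP[]. Qed.

End RealPart.

(* The case g = +oo forces every t i to vanish. *)
Lemma mule_sum_le {R : realType} {I : finType} {g : \bar R} {t h : I -> R} {a : R} :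
  (0 <= g)%E -> (forall i, 0 <= t i) -> (forall i, (t i)%:E * g <= (h i)%:E)%E ->
  a <= \sum_i t i -> (a%:E * g <= (\sum_i h i)%:E)%E.
Proof.
case: g => [r| |] // r_ge0 t_ge0 tg_le a_le.
  rewrite lee_fin in r_ge0; rewrite -EFinM lee_fin.
  apply: le_trans (ler_wpM2r r_ge0 a_le) _; rewrite mulr_suml.
  by apply: ler_sum => i _; rewrite -lee_fin EFinM.
have t0 i : t i = 0.
  have := t_ge0 i; rewrite le_eqVlt => /predU1P[<-//|ti_gt0].
  by have := tg_le i; rewrite mulry gtr0_sg // mul1e leye_eq.
have h_ge0 i : 0 <= h i by have := tg_le i; rewrite t0 mul0e lee_fin.
apply: (@le_trans _ _ 0%E); last by rewrite lee_fin sumr_ge0.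
by apply: mule_le0_ge0; rewrite // lee_fin (le_trans a_le) // big1.
Qed.

Section InnerProduct.
Context {R : realType} {stat : statistics} {L : nat}.
Local Notation vec := (vec R L).
Local Notation op := (op R L).
Local Notation inner := (inner R stat L).
Local Notation in_sector := (in_sector stat L).
Local Notation sector := (sector R stat L).
Local Notation Re := (@complex.Re R).
Implicit Types (n : nat) (phi psi u v : vec).

Lemma eq_innerr n phi u v :
  (forall c, in_sector n c -> u c = v c) -> inner n phi u = inner n phi v.
Proof. by move=> Euv; apply: eq_bigr => f /Euv ->. Qed.

Lemma inner0r n phi u : (forall c, in_sector n c -> u c = 0) -> inner n phi u = 0.
Proof. by move=> u0; rewrite /inner big1 // => f /u0 ->; rewrite mulr0. Qed.

Lemma inner0l n phi u : (forall c, in_sector n c -> u c = 0) -> inner n u phi = 0.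
Proof. by move=> u0; rewrite /inner big1 // => f /u0 ->; rewrite conjC0 mul0r. Qed.

Lemma innerC n phi psi : inner n psi phi = (inner n phi psi)^*.
Proof.
by rewrite /inner rmorph_sum; apply: eq_bigr => f _; rewrite rmorphM /= conjCK mulrC.
Qed.

Lemma inner_sumr n phi (I : Type) (r : seq I) (P : pred I) (F : I -> vec) :
  inner n phi (fun c => \sum_(i <- r | P i) F i c) = \sum_(i <- r | P i) inner n phi (F i).
Proof. by rewrite /inner exchange_big; apply: eq_bigr => f _; rewrite mulr_sumr. Qed.

Lemma inner_suml n phi (I : Type) (r : seq I) (P : pred I) (F : I -> vec) :
  inner n (fun c => \sum_(i <- r | P i) F i c) phi = \sum_(i <- r | P i) inner n (F i) phi.
Proof.
by rewrite innerC inner_sumr rmorph_sum; apply: eq_bigr => i _; rewrite [RHS]innerC.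
Qed.

Lemma innerDr n phi u v :
  inner n phi (fun c => u c + v c) = inner n phi u + inner n phi v.
Proof. by rewrite /inner -big_split; apply: eq_bigr => f _; rewrite mulrDr. Qed.

Lemma innerBr n phi u v :
  inner n phi (fun c => u c - v c) = inner n phi u - inner n phi v.
Proof. by rewrite /inner -sumrB; apply: eq_bigr => f _; rewrite mulrBr. Qed.

Lemma innerZr n phi u a : inner n phi (fun c => a * u c) = a * inner n phi u.
Proof. by rewrite /inner mulr_sumr; apply: eq_bigr => f _; rewrite mulrCA. Qed.

Lemma innerDl n phi u v :
  inner n (fun c => u c + v c) phi = inner n u phi + inner n v phi.
Proof. by rewrite innerC innerDr rmorphD /= -!innerC. Qed.

Lemma innerBl n phi u v :
  inner n (fun c => u c - v c) phi = inner n u phi - inner n v phi.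
Proof. by rewrite innerC innerBr rmorphB /= -!innerC. Qed.

Lemma innerZl n phi u a : inner n (fun c => a * u c) phi = a^* * inner n u phi.
Proof. by rewrite innerC innerZr rmorphM /= -!innerC. Qed.

Lemma Re_innerC n phi psi : Re (inner n phi psi) = Re (inner n psi phi).
Proof. by rewrite innerC Re_conjC. Qed.

Lemma inner_ge0 n phi : 0 <= inner n phi phi.
Proof. by apply: sumr_ge0 => f _; rewrite mulrC mul_conjC_ge0. Qed.

Lemma Re_inner_ge0 n phi : 0 <= Re (inner n phi phi).
Proof. by have := inner_ge0 n phi; rewrite lecE => /andP[]. Qed.

Lemma inner_self_real n phi : inner n phi phi = (Re (inner n phi phi))%:C.
Proof. by have := ger0_Im (inner_ge0 n phi); case: (inner n phi phi) => a b /= ->. Qed.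

Lemma cfg_ofK n c : in_sector n c -> cfg_of L n [ffun i => inord (c i)] = c.
Proof.
move=> /andP[/eqP sum_c _]; apply/ffunP => i; rewrite !ffunE inordK //.
by rewrite ltnS -sum_c (bigD1 i) //= leq_addr.
Qed.

Lemma Re_inner_eq0 n phi : Re (inner n phi phi) = 0 ->
  forall c, in_sector n c -> phi c = 0.
Proof.
move=> Re0 c c_in; have phi0 : inner n phi phi = 0 by rewrite inner_self_real Re0.
have summand_ge0 (f : {ffun 'I_L -> 'I_n.+1}) : in_sector n (cfg_of L n f) ->
    0 <= (phi (cfg_of L n f))^* * phi (cfg_of L n f).
  by move=> _; rewrite mulrC mul_conjC_ge0.
have /(_ [ffun i => inord (c i)]) := psumr_eq0P summand_ge0 phi0.
by rewrite cfg_ofK // => /(_ c_in) /eqP; rewrite mulf_eq0 conjC_eq0 orbb => /eqP.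
Qed.

Lemma sectorB {n u v} : sector n u -> sector n v -> sector n (fun c => u c - v c).
Proof. by move=> Su Sv c c_out; rewrite Su // Sv // subr0. Qed.

Lemma sectorZ {n} a {u} : sector n u -> sector n (fun c => a * u c).
Proof. by move=> Su c c_out; rewrite Su // mulr0. Qed.

Lemma sector_sum n (F : 'I_L -> vec) :
  (forall j, sector n (F j)) -> sector n (fun c => \sum_(j < L) F j c).
Proof. by move=> SF c c_out; rewrite big1 // => j _; apply: SF. Qed.

Lemma vnorm_sqr n phi : vnorm R stat L n phi ^+ 2 = Re (inner n phi phi).
Proof. by rewrite sqr_sqrtr // Re_inner_ge0. Qed.

(* Expand [|r psi - chi|^2 >= 0] with [r = |chi|]. *)
Lemma Re_inner_le_vnorm {n psi} chi : Re (inner n psi psi) = 1 ->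
  Re (inner n psi chi) <= vnorm R stat L n chi.
Proof.
move=> psi1; set r := vnorm R stat L n chi.
have r_ge0 : 0 <= r by rewrite sqrtr_ge0.
have r2 : r ^+ 2 = Re (inner n chi chi) by rewrite vnorm_sqr.
have := Re_inner_ge0 n (fun c => r%:C * psi c - chi c).
rewrite innerBl !innerBr !innerZl !innerZr conjC_real !Re_sub !Re_scale psi1 -r2.
rewrite (Re_innerC n chi) => expansion.
have [r0|r_neq0] := eqVneq r 0.
  by rewrite inner0r //; apply: Re_inner_eq0; rewrite -r2 r0 expr0n.
have r_gt0 : 0 < r by rewrite lt_def r_neq0.
nra.
Qed.

(* Sum over pairs of [Re <F_i, F_j> <= (|F_i|^2 + |F_j|^2) / 2]. *)
Lemma Re_inner_sum_le n (F : 'I_L -> vec) :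
  Re (inner n (fun c => \sum_(j < L) F j c) (fun c => \sum_(j < L) F j c)) <=
  L%:R * \sum_(j < L) Re (inner n (F j) (F j)).
Proof.
set a := fun j => Re (inner n (F j) (F j)).
have pair_le i j : 2 * Re (inner n (F i) (F j)) <= a i + a j.
  have := Re_inner_ge0 n (fun c => F i c - F j c).
  rewrite innerBl !innerBr !Re_sub (Re_innerC n (F j)) /a; lra.
rewrite inner_suml Re_sum -(@ler_pM2l _ 2) // mulr_sumr.
under eq_bigr do rewrite inner_sumr Re_sum mulr_sumr.
apply: le_trans (ler_sum _ (fun i _ => ler_sum _ (fun j _ => pair_le i j))) _.
under eq_bigr do rewrite big_split /= sumr_const card_ord.
by rewrite big_split /= sumr_const card_ord sumrMnl !mulr_natl mulr2n lexx.
Qed.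

Lemma Re_inner_le_opnorm {n} {T : op} {K : R} {psi} :
  (forall chi, sector n chi -> Re (inner n (T chi) (T chi)) <= K * Re (inner n chi chi)) ->
  sector n psi -> vnorm R stat L n psi = 1 -> Re (inner n psi (T psi)) <= opnorm R stat L n T.
Proof.
move=> T_bound Spsi psi1.
have unit_Re chi : vnorm R stat L n chi = 1 -> Re (inner n chi chi) = 1.
  by move=> chi1; rewrite -vnorm_sqr chi1 expr1n.
apply: le_trans (Re_inner_le_vnorm (T psi) (unit_Re _ psi1)) _.
have bounded : has_ubound [set vnorm R stat L n (T chi) | chi in
    [set chi | sector n chi /\ vnorm R stat L n chi = 1]]%classic.
  exists (Num.sqrt K) => _ [chi [Schi chi1] <-]; apply: ler_wsqrtr.
  by rewrite -[K]mulr1 -(unit_Re _ chi1) T_bound.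
apply: sup_upper_bound; last by exists psi.
by split=> //; exists (vnorm R stat L n (T psi)), psi.
Qed.

Lemma Ham_selfadjoint {W : coeffs R L} {m0 m1 n} :
  (forall m, (m0 <= m <= m1)%N -> forall phi psi, sector n phi -> sector n psi ->
     inner n phi (Hm R stat L W m psi) = inner n (Hm R stat L W m phi) psi) ->
  forall phi psi, sector n phi -> sector n psi ->
    inner n phi (Ham R stat L W m0 m1 psi) = inner n (Ham R stat L W m0 m1 phi) psi.
Proof.
move=> Hm_sa phi psi Sphi Spsi; rewrite /Ham inner_sumr inner_suml.
rewrite big_nat_cond [RHS]big_nat_cond; apply: eq_bigr => m /andP[m_in _].
by apply: Hm_sa.
Qed.

End InnerProduct.

Section LinearOperators.
Context {R : realType} {stat : statistics} {L : nat}.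
Local Notation op := (op R L).
Local Notation ann := (ann R stat L).
Local Notation cre := (cre R stat L).

Definition linear_op (T : op) := forall a u v,
  T (fun c => a * u c + v c) = (fun c => a * T u c + T v c).

Lemma ann_linear j : linear_op (ann j).
Proof.
move=> a u v; apply: funext => c; rewrite /ann; case: stat.
  by case: ifP => _; rewrite ?mulr0 ?addr0 // mulrDr mulrCA.
by rewrite mulrDr mulrCA.
Qed.

Lemma cre_linear j : linear_op (cre j).
Proof.
move=> a u v; apply: funext => c; rewrite /cre.
by case: stat; case: ifP => _; rewrite ?mulr0 ?addr0 // mulrDr mulrCA.
Qed.

Lemma ann_str_linear ks : linear_op (ann_str R stat L ks).
Proof. by elim: ks => [|k ks IH] a u v //=; rewrite ann_linear IH. Qed.

Lemma cre_str_linear js : linear_op (cre_str R stat L js).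
Proof. by elim: js => [|j js IH] a u v //=; rewrite IH cre_linear. Qed.

Lemma Hm_linear W m : linear_op (Hm R stat L W m).
Proof.
move=> a u v; apply: funext => c; rewrite /Hm mulr_sumr -big_split /=.
apply: eq_bigr => js _; rewrite mulr_sumr -big_split /=.
by apply: eq_bigr => ks _; rewrite ann_str_linear cre_str_linear mulrDr mulrCA.
Qed.

Lemma Ham_linear W m0 m1 : linear_op (Ham R stat L W m0 m1).
Proof.
move=> a u v; apply: funext => c; rewrite /Ham mulr_sumr -big_split /=.
by apply: eq_bigr => m _; rewrite Hm_linear.
Qed.

Context {T : op}.
Hypothesis T_linear : linear_op T.

Lemma linear_opD u v : T (fun c => u c + v c) = (fun c => T u c + T v c).
Proof.
have := T_linear 1 u v; under eq_fun do rewrite mul1r.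
by move=> ->; under eq_fun do rewrite mul1r.
Qed.

Lemma linear_opZ a u : T (fun c => a * u c) = (fun c => a * T u c).
Proof.
have T0 : T (fun _ => 0) = (fun _ => 0).
  apply: funext => c; have /(congr1 (fun f => f c)) := T_linear 1 (fun _ => 0) (fun _ => 0).
  by under eq_fun do rewrite mulr0 add0r; rewrite mul1r -{1}[T _ c]add0r => /addIr <-.
have := T_linear a u (fun _ => 0); under eq_fun do rewrite addr0.
by rewrite T0 => ->; under eq_fun do rewrite addr0.
Qed.

End LinearOperators.

Section CreationAnnihilation.
Context {R : realType} {stat : statistics} {L : nat}.
Local Notation vec := (vec R L).
Local Notation cfg := (cfg L).
Local Notation upd := (upd L).
Local Notation admissible := (admissible stat L).
Local Notation in_sector := (in_sector stat L).
Local Notation sector := (sector R stat L).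
Local Notation inner := (inner R stat L).
Local Notation ann := (ann R stat L).
Local Notation cre := (cre R stat L).
Local Notation jwsign := (jwsign R L).
Local Notation Re := (@complex.Re R).
Implicit Types (c : cfg) (j : 'I_L) (phi psi : vec).

Lemma upd_same c j k : upd c j k j = k.
Proof. by rewrite ffunE eqxx. Qed.

Lemma upd_upd c j k k' : upd (upd c j k) j k' = upd c j k'.
Proof. by apply/ffunP => i; rewrite !ffunE; case: eqP. Qed.

Lemma upd_id c j : upd c j (c j) = c.
Proof. by apply/ffunP => i; rewrite !ffunE; case: eqP => [->|]. Qed.

Lemma sum_upd c j k :
  (\sum_(i < L) upd c j k i = k + \sum_(i < L | i != j) c i)%N.
Proof.
rewrite (bigD1 j) //= upd_same; congr (_ + _)%N.
by apply: eq_bigr => i /negPf ij; rewrite ffunE ij.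
Qed.

Lemma sum_cfg c j : (\sum_(i < L) c i = c j + \sum_(i < L | i != j) c i)%N.
Proof. by rewrite -{1}(upd_id c j) sum_upd. Qed.

Lemma in_sector_le n c i : in_sector n c -> (c i <= n)%N.
Proof. by move=> /andP[/eqP <- _]; rewrite (sum_cfg c i) leq_addr. Qed.

Lemma admissible_upd_le {c j k k'} : (k' <= k)%N ->
  admissible (upd c j k) -> admissible (upd c j k').
Proof.
rewrite /admissible; case: stat => // k'k /forallP adm; apply/forallP => i.
by have := adm i; rewrite !ffunE; case: eqP => // _; apply: leq_trans.
Qed.

Lemma admissible_upd {c j k} : (k <= 1)%N -> admissible c -> admissible (upd c j k).
Proof.
rewrite /admissible; case: stat => // k1 /forallP adm; apply/forallP => i.
by rewrite ffunE; case: eqP.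
Qed.

Lemma admissible_fermion c j : stat = Fermion -> admissible c -> (c j <= 1)%N.
Proof. by rewrite /admissible => -> /forallP. Qed.

Lemma ann_sector {n} j {psi} : sector n.+1 psi -> sector n (ann j psi).
Proof.
move=> Spsi c c_out; rewrite /ann; case E: stat.
  case: ifP => // /eqP cj0; rewrite Spsi ?mulr0 //; apply: contra c_out.
  rewrite /in_sector sum_upd (sum_cfg c j) cj0 eqSS => /andP[-> adm].
  by rewrite -[c](upd_id _ j) cj0 (admissible_upd_le (leq0n 1) adm).
rewrite Spsi ?mulr0 //; apply: contra c_out.
by rewrite /in_sector sum_upd (sum_cfg c j) addSn eqSS /admissible E => /andP[->].
Qed.

Lemma cre_sector {n} j {phi} : sector n phi -> sector n.+1 (cre j phi).
Proof.
move=> Sphi c c_out; rewrite /cre; case E: stat.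
  case: ifP => // /eqP cj1; rewrite Sphi ?mulr0 //; apply: contra c_out.
  rewrite /in_sector sum_upd (sum_cfg c j) cj1 => /andP[/eqP <- adm].
  by rewrite eqxx -[c](upd_id _ j) cj1 -(upd_upd c j 0) admissible_upd.
case: ifP => // cj_gt0; rewrite Sphi ?mulr0 //; apply: contra c_out.
rewrite /in_sector sum_upd (sum_cfg c j) /admissible E !andbT => /eqP <-.
by rewrite -addSn prednK.
Qed.

Definition sum_sector n (F : cfg -> R[i]) :=
  \sum_(f : {ffun 'I_L -> 'I_n.+1} | in_sector n (cfg_of L n f)) F (cfg_of L n f).

(* Reindex by c |-> c + e_j, a bijection onto the (n+1)-particle configurations with c_j > 0. *)
Lemma sum_sector_shift n j (F : cfg -> R[i]) :
  sum_sector n.+1 (fun c => if (0 < c j)%N then F c else 0) =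
  sum_sector n (fun c => if admissible (upd c j (c j).+1) then F (upd c j (c j).+1) else 0).
Proof.
rewrite /sum_sector -big_mkcondr -[RHS]big_mkcondr /=.
pose up (g : {ffun 'I_L -> 'I_n.+1}) : {ffun 'I_L -> 'I_n.+2} :=
  [ffun i => inord (g i + (i == j))].
pose down (f : {ffun 'I_L -> 'I_n.+2}) : {ffun 'I_L -> 'I_n.+1} :=
  [ffun i => inord (f i - (i == j))].
have up_lt (g : {ffun 'I_L -> 'I_n.+1}) i : (g i + (i == j) < n.+2)%N.
  by have := leq_add (ltn_ord (g i)) (leq_b1 (i == j)); rewrite addn1 addSn.
have cfg_up g : cfg_of L n.+1 (up g) = upd (cfg_of L n g) j (cfg_of L n g j).+1.
  apply/ffunP => i; rewrite !ffunE inordK //.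
  by case: eqP => [->|]; rewrite ?addn1 ?addn0.
have downK g : down (up g) = g.
  by apply/ffunP => i; apply: val_inj; rewrite !ffunE /= (inordK (up_lt g i)) addnK inordK.
rewrite (reindex_onto up down).
  apply: eq_big => g; last by move=> _; rewrite cfg_up.
  rewrite downK eqxx andbT cfg_up upd_same ltn0Sn andbT.
  rewrite /in_sector sum_upd (sum_cfg (cfg_of L n g) j) addSn eqSS.
  case: (_ == n) => //=; case adm: (admissible _); last by rewrite andbF.
  by rewrite andbT -{1}(upd_id (cfg_of L n g) j) (admissible_upd_le (leqnSn _) adm).
move=> f /andP[f_in fj_gt0]; rewrite ffunE /= in fj_gt0.
have down_lt i : (f i - (i == j) < n.+1)%N.
  case: eqP => [->|/eqP ij]; first by have := in_sector_le _ _ j f_in; rewrite ffunE /=; lia.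
  move: f_in => /andP[/eqP sum_f _]; move: sum_f.
  rewrite (sum_cfg _ j) (bigD1 i) //= !ffunE subn0; lia.
apply/ffunP => i; apply: val_inj.
have subnK_ij : (f i - (i == j) + (i == j) = f i)%N.
  by case: eqP => [->|_]; rewrite ?subnK ?subn0 ?addn0.
by rewrite !ffunE /= (inordK (down_lt i)) subnK_ij inordK.
Qed.

Lemma jwsign_upd c j k : jwsign (upd c j k) j = jwsign c j.
Proof.
congr (_ ^+ _); apply: eq_bigr => i ij.
by rewrite ffunE ifN // neq_ltn ij.
Qed.

Lemma jwsign_conj c j : (jwsign c j)^* = jwsign c j.
Proof. by rewrite rmorphXn rmorphN1. Qed.

Lemma jwsign_sqr c j : jwsign c j * jwsign c j = 1.
Proof. by rewrite -exprD addnn -mul2n exprM sqrrN !expr1n. Qed.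

Lemma conj_sqrtC (x : R) : ((Num.sqrt x)%:C)^* = (Num.sqrt x)%:C.
Proof. by rewrite geC0_conj // ler0c sqrtr_ge0. Qed.

Lemma inner_cre n j psi phi : inner n.+1 psi (cre j phi) = inner n (ann j psi) phi.
Proof.
have -> : inner n.+1 psi (cre j phi) =
    sum_sector n.+1 (fun c => if (0 < c j)%N then (psi c)^* * cre j phi c else 0).
  apply: eq_bigr => f _; case: ifP => //; rewrite lt0n => /negbFE /eqP c0.
  by rewrite /cre; case: stat; rewrite c0 /= mulr0.
rewrite sum_sector_shift; apply: eq_bigr => g /andP[_ adm]; set c := cfg_of L n g.
rewrite /cre /ann; case E: stat; last first.
  by rewrite upd_same /= upd_upd upd_id rmorphM /= conj_sqrtC mulrCA mulrA.
have [cj0|cj_neq0] := eqVneq (c j) 0%N.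
  rewrite cj0 -E admissible_upd ?(admissible_fermion _ E) // upd_same eqxx upd_upd.
  by rewrite -cj0 upd_id cj0 rmorphM /= jwsign_conj jwsign_upd mulrCA mulrA.
case: ifP => [|]; last by rewrite rmorph0 mul0r.
by move=> /forallP /(_ j); rewrite upd_same ltnS leqn0 (negPf cj_neq0).
Qed.

Lemma cre_annE j psi c : admissible c -> cre j (ann j psi) c = (c j)%:R * psi c.
Proof.
move=> adm; rewrite /cre /ann; case E: stat.
  have [cj1|cj_neq1] := eqVneq (c j) 1%N.
    rewrite upd_same eqxx upd_upd -cj1 upd_id cj1 jwsign_upd mulrA jwsign_sqr.
    by rewrite mul1r.
  have := admissible_fermion c j E adm; rewrite leq_eqVlt (negPf cj_neq1) ltnS leqn0.
  by move=> /eqP ->; rewrite mul0r.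
case: ifP => [cj_gt0|]; last by rewrite lt0n => /negbFE /eqP ->; rewrite mul0r.
rewrite upd_same upd_upd prednK // upd_id mulrA -rmorphM /= -expr2.
by rewrite sqr_sqrtr ?ler0n // rmorph_nat.
Qed.

Lemma ann_creE j phi c : admissible c ->
  ann j (cre j phi) c = (if stat is Boson then (c j).+1 else 1 - c j)%:R * phi c.
Proof.
move=> adm; rewrite /cre /ann; case E: stat.
  have [cj0|cj_neq0] := eqVneq (c j) 0%N.
    rewrite cj0 upd_same eqxx upd_upd -cj0 upd_id jwsign_upd mulrA jwsign_sqr.
    by rewrite subSnn mul1r.
  have := admissible_fermion c j E adm; rewrite leq_eqVlt ltnS leqn0 (negPf cj_neq0) orbF.
  by move=> /eqP ->; rewrite subnn mul0r.
rewrite upd_same /= upd_upd upd_id mulrA -rmorphM /= -expr2.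
by rewrite sqr_sqrtr ?ler0n // rmorph_nat.
Qed.

(* sum_j a_j^+ a_j is the number operator. *)
Lemma sum_inner_ann n psi :
  \sum_(j < L) inner n (ann j psi) (ann j psi) = n.+1%:R * inner n.+1 psi psi.
Proof.
under eq_bigr do rewrite -inner_cre.
rewrite -inner_sumr -innerZr; apply: eq_innerr => c /andP[/eqP sum_c adm].
by under eq_bigr do rewrite cre_annE //; rewrite -mulr_suml -natr_sum sum_c.
Qed.

Lemma Re_inner_cre_le n j phi :
  Re (inner n.+1 (cre j phi) (cre j phi)) <= n.+1%:R * Re (inner n phi phi).
Proof.
rewrite inner_cre -Re_scale -natC; apply: ler_Re.
rewrite /inner mulr_sumr; apply: ler_sum => f /[dup] f_in /andP[_ adm].
rewrite ann_creE // rmorphM /= conjC_nat -mulrA ler_wpM2r ?(mulrC _^*%R) ?mul_conjC_ge0 //.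
by rewrite ler_nat; have := in_sector_le _ _ j f_in; case: stat => /=; lia.
Qed.

End CreationAnnihilation.

Definition perp {R : realType} {L : nat} (P : op R L) : op R L :=
  fun psi c => psi c - P psi c.

Lemma perp_proj_add {R : realType} {L : nat} (P : op R L) (phi : vec R L) :
  (fun c => P phi c + perp P phi c) = phi.
Proof. by apply: funext => c; rewrite addrC subrK. Qed.

Section KernelProjection.
Context {R : realType} {stat : statistics} {L : nat}.
Local Notation vec := (vec R L).
Local Notation op := (op R L).
Local Notation inner := (inner R stat L).
Local Notation sector := (sector R stat L).
Local Notation Re := (@complex.Re R).
Context {H P : op} {n : nat}.
Hypothesis P_ker : is_ker_proj R stat L H n P.
Implicit Types (phi psi : vec).

Lemma proj_sector {phi} : sector n phi -> sector n (P phi).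
Proof. by move=> /P_ker[[]]. Qed.

Lemma proj_ker {phi} c : sector n phi -> H (P phi) c = 0.
Proof. by move=> /P_ker[[]]. Qed.

Lemma perp_sector {phi} : sector n phi -> sector n (perp P phi).
Proof. by move=> Sphi; exact: sectorB Sphi (proj_sector Sphi). Qed.

Lemma inner_proj_perp {phi} : sector n phi -> inner n (P phi) (perp P phi) = 0.
Proof. by move=> /P_ker[ker_P]; apply. Qed.

Lemma inner_perp_proj {phi} : sector n phi -> inner n (perp P phi) (P phi) = 0.
Proof. by move=> Sphi; rewrite innerC inner_proj_perp // conjC0. Qed.

Lemma inner_proj {phi} : sector n phi -> inner n phi (P phi) = inner n (P phi) (P phi).
Proof.
by move=> Sphi; rewrite -{1}(perp_proj_add P phi) innerDl inner_perp_proj // addr0.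
Qed.

Lemma inner_proj_pythagoras {phi} : sector n phi ->
  inner n phi phi = inner n (P phi) (P phi) + inner n (perp P phi) (perp P phi).
Proof.
move=> Sphi; rewrite -{1 2}(perp_proj_add P phi) innerDl !(innerDr _ _ (P phi) (perp P phi)).
by rewrite inner_proj_perp // inner_perp_proj // addr0 add0r.
Qed.

Lemma Re_inner_proj_le {phi} : sector n phi ->
  Re (inner n (P phi) (P phi)) <= Re (inner n phi phi).
Proof.
by move=> Sphi; rewrite (inner_proj_pythagoras Sphi) Re_add lerDl Re_inner_ge0.
Qed.

Lemma Re_inner_perp_le {phi} : sector n phi ->
  Re (inner n (perp P phi) (perp P phi)) <= Re (inner n phi phi).
Proof.
by move=> Sphi; rewrite (inner_proj_pythagoras Sphi) Re_add lerDr Re_inner_ge0.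
Qed.

Lemma proj_orth_ker {psi} : sector n psi ->
  (forall phi, in_ker R stat L H n phi -> inner n phi psi = 0) -> forall c, P psi c = 0.
Proof.
move=> Spsi psi_orth c; have [[SP kerP] perp_orth] := P_ker _ Spsi.
have : inner n (P psi) (P psi) = 0.
  have := perp_orth _ (conj SP kerP); rewrite innerBr psi_orth // sub0r.
  by move/eqP; rewrite oppr_eq0 => /eqP.
move=> /(congr1 (@complex.Re R)) /Re_inner_eq0 PP0.
by case: (boolP (in_sector stat L n c)) => [/PP0|/SP].
Qed.

End KernelProjection.

Section Gap.
Context {R : realType} {stat : statistics} {L : nat}.
Local Notation vec := (vec R L).
Local Notation op := (op R L).
Local Notation inner := (inner R stat L).
Local Notation sector := (sector R stat L).
Local Notation gap := (gap R stat L).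
Local Notation Re := (@complex.Re R).

Lemma gap_ge0 (H : op) n : (forall psi, sector n psi -> 0 <= inner n psi (H psi)) ->
  (0 <= gap H n)%E.
Proof.
move=> H_ge0; apply: le_ereal_inf_tmp => _ [phi [Sphi _] <-].
by rewrite lee_fin; have := H_ge0 _ Sphi; rewrite lecE => /andP[].
Qed.

Context {H P : op} {n : nat}.
Hypothesis H_linear : linear_op H.
Hypothesis H_selfadjoint : forall phi psi, sector n phi -> sector n psi ->
  inner n phi (H psi) = inner n (H phi) psi.
Hypothesis P_ker : is_ker_proj R stat L H n P.

Lemma energy_perp (phi : vec) : sector n phi ->
  inner n phi (H phi) = inner n (perp P phi) (H (perp P phi)).
Proof.
move=> Sphi; have HP0 c : H (P phi) c = 0 := proj_ker P_ker c Sphi.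
have -> : H (perp P phi) = H phi.
  rewrite -{2}(perp_proj_add P phi) linear_opD //.
  by apply: funext => c; rewrite HP0 add0r.
have SP := proj_sector P_ker Sphi.
rewrite -{1}(perp_proj_add P phi) innerDl H_selfadjoint //.
by rewrite inner0l ?add0r // => c _; rewrite HP0.
Qed.

(* Normalise the component of phi orthogonal to ker H_n and test it in the infimum. *)
Lemma gap_le_energy {phi : vec} : sector n phi ->
  ((Re (inner n (perp P phi) (perp P phi)))%:E * gap H n <=
   (Re (inner n phi (H phi)))%:E)%E.
Proof.
move=> Sphi; rewrite energy_perp //; set u := perp P phi.
have Su : sector n u := perp_sector P_ker Sphi.
have [u0|u_neq0] := eqVneq (Re (inner n u u)) 0.
  by rewrite u0 mul0e inner0l; [| exact: Re_inner_eq0].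
set s := Num.sqrt (Re (inner n u u)).
have s_gt0 : 0 < s by rewrite sqrtr_gt0 lt_def u_neq0 Re_inner_ge0.
have uu : Re (inner n u u) = s ^+ 2 by rewrite sqr_sqrtr // Re_inner_ge0.
have gap_le : (gap H n <= (s ^- 2 * Re (inner n u (H u)))%:E)%E.
  apply: ereal_inf_lbound; exists (fun c => (s^-1)%:C * u c); last first.
    by rewrite linear_opZ // innerZr innerZl conjC_real !Re_scale mulrA -expr2 exprVn.
  split; first exact: sectorZ.
  split.
    by move=> psi ker_psi; rewrite innerZr; have [_ ->] := P_ker _ Sphi; rewrite ?mulr0.
  rewrite /vnorm innerZr innerZl conjC_real !Re_scale uu mulrA -expr2 exprVn.
  by rewrite mulVf ?sqrtr1 // expf_neq0 // gt_eqF.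
rewrite uu; apply: le_trans (lee_wpmul2l _ gap_le) _.
  by rewrite lee_fin exprn_ge0 // ltW.
by rewrite -EFinM mulrA divff ?mul1r // expf_neq0 // gt_eqF.
Qed.

End Gap.

Definition lifted_proj (R : realType) (stat : statistics) (L : nat) (Pn Pn1 : op R L) :
    op R L := fun psi =>
  perp Pn1 (fun c => \sum_(j < L) cre R stat L j (Pn (ann R stat L j (perp Pn1 psi))) c).

Section LiftedProjection.
Context {R : realType} {stat : statistics} {L n : nat} {H Pn Pn1 : op R L}.
Local Notation vec := (vec R L).
Local Notation inner := (inner R stat L).
Local Notation sector := (sector R stat L).
Local Notation ann := (ann R stat L).
Local Notation cre := (cre R stat L).
Local Notation X := (lifted_proj R stat L Pn Pn1).
Local Notation Re := (@complex.Re R).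
Hypothesis Pn_ker : is_ker_proj R stat L H n Pn.
Hypothesis Pn1_ker : is_ker_proj R stat L H n.+1 Pn1.
Implicit Types psi : vec.

Lemma lifted_proj_bound psi : sector n.+1 psi ->
  Re (inner n.+1 (X psi) (X psi)) <= (L%:R * n.+1%:R ^+ 2) * Re (inner n.+1 psi psi).
Proof.
move=> Spsi; set chi := perp Pn1 psi.
have Schi : sector n.+1 chi := perp_sector Pn1_ker Spsi.
set Y := fun c => \sum_(j < L) cre j (Pn (ann j chi)) c.
have SY : sector n.+1 Y.
  by apply: sector_sum => j; apply/cre_sector/(proj_sector Pn_ker)/ann_sector.
apply: le_trans (Re_inner_perp_le Pn1_ker SY) _.
apply: le_trans (Re_inner_sum_le _ _) _; rewrite -!mulrA ler_wpM2l //.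
apply: (@le_trans _ _ (\sum_(j < L) n.+1%:R * Re (inner n (ann j chi) (ann j chi)))).
  apply: ler_sum => j _; apply: le_trans (Re_inner_cre_le _ _ _) _.
  by rewrite ler_wpM2l // (Re_inner_proj_le Pn_ker) //; apply: ann_sector.
rewrite -mulr_sumr -Re_sum sum_inner_ann natC Re_scale !ler_wpM2l //.
exact: (Re_inner_perp_le Pn1_ker Spsi).
Qed.

Lemma Re_inner_lifted_proj psi : sector n.+1 psi ->
  (forall phi, in_ker R stat L H n.+1 phi -> inner n.+1 phi psi = 0) ->
  Re (inner n.+1 psi (X psi)) = \sum_(j < L) Re (inner n (Pn (ann j psi)) (Pn (ann j psi))).
Proof.
move=> Spsi psi_orth; rewrite /lifted_proj.
have -> : perp Pn1 psi = psi.
  by apply: funext => c; rewrite /perp (proj_orth_ker Pn1_ker Spsi psi_orth) subr0.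
set Y := fun c => \sum_(j < L) cre j (Pn (ann j psi)) c.
have SY : sector n.+1 Y.
  by apply: sector_sum => j; apply/cre_sector/(proj_sector Pn_ker)/ann_sector.
have [[SP1 kerP1] _] := Pn1_ker _ SY.
rewrite /perp innerBr (innerC _ (Pn1 Y)) psi_orth; last by split.
rewrite conjC0 subr0 inner_sumr Re_sum; apply: eq_bigr => j _.
by rewrite inner_cre (inner_proj Pn_ker) //; apply: ann_sector.
Qed.

Lemma lifted_proj_perp_mass {psi} : sector n.+1 psi ->
  (forall phi, in_ker R stat L H n.+1 phi -> inner n.+1 phi psi = 0) ->
  vnorm R stat L n.+1 psi = 1 ->
  n.+1%:R - opnorm R stat L n.+1 X <=
  \sum_(j < L) Re (inner n (perp Pn (ann j psi)) (perp Pn (ann j psi))).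
Proof.
move=> Spsi psi_orth psi1.
have := Re_inner_le_opnorm lifted_proj_bound Spsi psi1.
rewrite Re_inner_lifted_proj //.
have := congr1 Re (sum_inner_ann (stat := stat) n psi).
rewrite natC Re_scale -vnorm_sqr psi1 expr1n mulr1 Re_sum.
under eq_bigr do rewrite (inner_proj_pythagoras Pn_ker (ann_sector _ Spsi)) Re_add.
rewrite big_split /=; lra.
Qed.

End LiftedProjection.

Theorem lemma1 (R : realType) (stat : statistics) (L : nat)
  (W : coeffs R L) (m0 m1 : nat) (n : nat)
  (Pn Pn1 : op R L) :
  (m0 <= m1)%N ->
  (* each H^{(m)}, m0 <= m <= m1, is self-adjoint *)
  (forall m, (m0 <= m <= m1)%N -> forall k (phi psi : vec R L),
      sector R stat L k phi -> sector R stat L k psi ->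
      inner R stat L k phi (Hm R stat L W m psi) = inner R stat L k (Hm R stat L W m phi) psi) ->
  (m1 <= n)%N ->
  (* H_n >= 0 *)
  (forall psi, sector R stat L n psi ->
      0 <= inner R stat L n psi (Ham R stat L W m0 m1 psi)) ->
  (* H_{n+1} >= 1/(n+1-m0) sum_j a_j^+ H_n a_j *)
  (forall psi, sector R stat L n.+1 psi ->
      ((n.+1 - m0)%:R)^-1 *
        \sum_(j < L) inner R stat L n.+1 psi
             (cre R stat L j (Ham R stat L W m0 m1 (ann R stat L j psi)))
      <= inner R stat L n.+1 psi (Ham R stat L W m0 m1 psi)) ->
  (* P_n, P_{n+1}: orthogonal projections onto ker H_n, ker H_{n+1} *)
  is_ker_proj R stat L (Ham R stat L W m0 m1) n Pn ->
  is_ker_proj R stat L (Ham R stat L W m0 m1) n.+1 Pn1 ->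
  let Pperp : op R L := fun psi c => psi c - Pn1 psi c in
  let X : op R L := fun psi =>
      Pperp (fun c => \sum_(j < L) cre R stat L j (Pn (ann R stat L j (Pperp psi))) c) in
  ((((n.+1)%:R - opnorm R stat L n.+1 X) / (n.+1 - m0)%:R)%:E
     * gap R stat L (Ham R stat L W m0 m1) n
   <= gap R stat L (Ham R stat L W m0 m1) n.+1)%E.
Proof.
move=> m0_le_m1 Hm_sa m1_le_n H_ge0 H_lower Pn_ker Pn1_ker; cbv zeta.
rewrite -[X in opnorm _ _ _ _ X]/(lifted_proj R stat L Pn Pn1).
set H := Ham R stat L W m0 m1.
have H_sa := Ham_selfadjoint (fun m m_in => Hm_sa m m_in n).
set A : R := (n.+1 - m0)%:R.
have A_gt0 : 0 < A by rewrite ltr0n subn_gt0 ltnS (leq_trans m0_le_m1).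
apply: le_ereal_inf_tmp => _ [psi [Spsi [psi_orth psi1]] <-].
have energy_lower : A^-1 * \sum_(j < L) complex.Re
    (inner R stat L n (ann R stat L j psi) (H (ann R stat L j psi))) <=
    complex.Re (inner R stat L n.+1 psi (H psi)).
  have := ler_Re (H_lower psi Spsi); rewrite natC -fmorphV Re_scale Re_sum.
  by under eq_bigr do rewrite inner_cre.
have perp_gap := mule_sum_le (gap_ge0 _ _ H_ge0) (fun j => Re_inner_ge0 _ _)
  (fun j => gap_le_energy (Ham_linear W m0 m1) H_sa Pn_ker (ann_sector j Spsi))
  (lifted_proj_perp_mass Pn_ker Pn1_ker Spsi psi_orth psi1).
rewrite mulrC EFinM -muleA; apply: le_trans (lee_wpmul2l _ perp_gap) _.
  by rewrite lee_fin invr_ge0 ltW.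
by rewrite -EFinM lee_fin.
Qed.
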